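(* Any contraction of a left increasing tree is left increasing: if $(T,\lambda)$ is a left increasing tree with $n$ branchings and $A\subseteq[n]$, then the increasing tree $\tau(\sigma(T,\lambda)|_A)$ is left increasing.
   Context: A (planar rooted) tree is a finite planar rooted tree in which each vertex has one outgoing edge and at least two incoming edges (ordered left to right); $\varepsilon$ is the trivial tree. $\bigvee(T_0,\ldots,T_m)$ ($m\ge1$) joins the roots of $T_0,\ldots,T_m$ to a new vertex with a new root. A vertex with $j+1$ incoming edges carries $j$ branchings (pairs of consecutive incoming edges). Branchings are totally ordered left to right recursively: for $T=\bigvee(T_0,\ldots,T_m)$ with root branchings $b_1,\ldots,b_m$, $b_i\prec b\prec b_{i+1}$ for $b$ in $T_i$; the natural labelling is the order-preserving bijection from $[n]=\{1,\ldots,n\}$ to the branchings. A level function is a surjection $\lambda$ from vertices onto $[k]$ strictly increasing along each leaf-to-root path; an increasing tree is $(T,\lambda)$; a branching has the level of its vertex. $\sigma(T,\lambda)=(P_1,\ldots,P_k)$ where $P_i$ is the set of natural labels of branchings at level $i$; $\sigma$ is a bijection from increasing trees with $n$ branchings to set compositions of $[n]$ (tuples of pairwise disjoint non-empty sets with union $[n]$), with inverse $\tau$. For a set composition $P=(P_1,\ldots,P_k)$ of $[n]$ and $A\subseteq[n]$, $P|_A$ is obtained from $(P_1\cap A,\ldots,P_k\cap A)$ by deleting empty entries and relabelling $A$ to $[|A|]$ by the order-preserving bijection. $\mathsf{Inc}$: $\mathsf{Inc}(\varepsilon)=\varepsilon$; if $T=\bigvee(T_0,\ldots,T_m)$ and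 $\mathsf{Inc}(T_i)=(T_i,\lambda_i)$ with $k_i$ levels, then $\mathsf{Inc}(T)=(T,\lambda)$ with $\lambda(v)=k_0+\cdots+k_{i-1}+\lambda_i(v)$ for $v$ in $T_i$ and root vertex level $k_0+\cdots+k_m+1$. An increasing tree is left increasing if it lies in the image of $\mathsf{Inc}$. *)

From mathcomp Require Import all_boot.
Set Implicit Arguments. Unset Strict Implicit. Unset Printing Implicit Defensive.

(* Planar rooted trees: [Eps] is the trivial tree, [Join ts] = \bigvee(T_0,...,T_m)
   with ts = [:: T_0; ...; T_m]; well-formedness requires m >= 1. *)
Inductive ptree := Eps | Join of seq ptree.

Fixpoint wf_ptree (t : ptree) : bool :=
  match t with Eps => true | Join ts => (2 <= size ts) && all wf_ptree ts end.

(* Trees whose vertices carry a natural-number label (the level). *)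
Inductive itree := IEps | IJoin of nat & seq itree.

Fixpoint vlevels (t : itree) : seq nat :=
  match t with IEps => [::] | IJoin l ts => l :: flatten (map vlevels ts) end.

Definition nlevels (t : itree) : nat := foldr maxn 0 (vlevels t).

Definition root_below (l : nat) (c : itree) : bool :=
  match c with IEps => true | IJoin l' _ => l' < l end.

Fixpoint incr_shape (t : itree) : bool :=
  match t with
  | IEps => true
  | IJoin l ts => [&& 2 <= size ts, all (root_below l) ts & all incr_shape ts]
  end.

(* (T, lambda) is an increasing tree: lambda is a surjection onto [k] = {1..k},
   strictly increasing along leaf-to-root paths. *)
Definition is_increasing (t : itree) : bool :=
  [&& incr_shape t, all (fun v => 0 < v) (vlevels t)
    & all (fun i => i \in vlevels t) (iota 1 (nlevels t))].

(* Levels of the branchings, listed in the natural (left-to-right) order: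
   for \bigvee(T_0,..,T_m) with root level l the order is
   (branchings of T_0), b_1, (branchings of T_1), ..., b_m, (branchings of T_m). *)
Fixpoint blevels (t : itree) : seq nat :=
  match t with
  | IEps => [::]
  | IJoin l ts =>
      match ts with
      | [::] => [::]
      | c0 :: cs => blevels c0 ++ flatten (map (fun c => l :: blevels c) cs)
      end
  end.

Definition nbranch (t : itree) : nat := size (blevels t).

(* Set compositions are represented as sequences of blocks, each block being the
   increasing list of its elements. *)
Definition setcomp := seq (seq nat).

Definition sigma (t : itree) : setcomp :=
  [seq [seq j <- iota 1 (nbranch t) | nth 0 (blevels t) j.-1 == i]
     | i <- iota 1 (nlevels t)].

(* order-preserving bijection A -> [|A|] *)
Definition rank (A : seq nat) (j : nat) : nat := size [seq b <- undup A | b <= j].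

Definition restrict (P : setcomp) (A : seq nat) : setcomp :=
  [seq map (rank A) B | B <- [seq [seq j <- B | j \in A] | B <- P] & B != [::]].

Fixpoint shift (s : nat) (t : itree) : itree :=
  match t with IEps => IEps | IJoin l ts => IJoin (s + l) (map (shift s) ts) end.

(* given the (Inc T_i, k_i), shift T_i by k_0 + ... + k_{i-1}; returns total *)
Fixpoint shift_all (rs : seq (itree * nat)) (acc : nat) : seq itree * nat :=
  match rs with
  | [::] => ([::], acc)
  | r :: rs' => let p := shift_all rs' (acc + r.2) in (shift acc r.1 :: p.1, p.2)
  end.

(* Inc T, together with its number of levels *)
Fixpoint Inc (t : ptree) : itree * nat :=
  match t with
  | Eps => (IEps, 0)
  | Join ts =>
      let p := shift_all (map Inc ts) 0 in (IJoin p.2.+1 p.1, p.2.+1)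
  end.

Definition left_increasing (X : itree) : Prop :=
  exists T : ptree, wf_ptree T /\ (Inc T).1 = X.

(* Read the levels of the branchings from left to right: this word determines
   sigma(T, lambda) (its blocks are the positions of the letters), and restricting
   sigma to A amounts to taking the subword at the positions in A and relabelling
   its letters order-preservingly.  An increasing tree is left increasing iff the
   levels of its vertices in postorder are 1, 2, ..., k, and this happens iff its
   branching word contains no subword a c b with b <= a < c.  Such pattern
   avoidance passes to subwords and to order-preserving relabellings, so the
   contracted tree is left increasing.  That tau exists at all holds because every
   word using exactly the letters 1..k is the branching word of an increasing
   tree: split it at the occurrences of its largest letter, which become the
   branchings of the root. *)

From HB Require Import structures.
From mathcomp Require Import all_boot zify.

Set Implicit Arguments.
Unset Strict Implicit.
Unset Printing Implicit Defensive.

(** * Nested induction on trees *)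

Fixpoint itree_enc (t : itree) : GenTree.tree nat :=
  if t is IJoin l ts then GenTree.Node l (map itree_enc ts) else GenTree.Leaf 0.

Fixpoint itree_dec (t : GenTree.tree nat) : itree :=
  if t is GenTree.Node l ts then IJoin l (map itree_dec ts) else IEps.

Lemma itree_encK t : itree_dec (itree_enc t) = t.
Proof.
move: t; fix IH 1 => -[|l ts] /=; [by [] | congr IJoin].
by elim: ts => //= c cs IHcs; rewrite IH IHcs.
Qed.

HB.instance Definition _ := Equality.copy itree (can_type itree_encK).

Fixpoint ptree_enc (t : ptree) : GenTree.tree unit :=
  if t is Join ts then GenTree.Node 0 (map ptree_enc ts) else GenTree.Leaf tt.

Fixpoint ptree_dec (t : GenTree.tree unit) : ptree :=
  if t is GenTree.Node _ ts then Join (map ptree_dec ts) else Eps.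

Lemma ptree_encK t : ptree_dec (ptree_enc t) = t.
Proof.
move: t; fix IH 1 => -[|ts] /=; [by [] | congr Join].
by elim: ts => //= c cs IHcs; rewrite IH IHcs.
Qed.

HB.instance Definition _ := Equality.copy ptree (can_type ptree_encK).

(* [IH] is cleared before automation could apply it to a non-subterm, which the
   guard checker would reject. *)
Lemma itree_ind_mem (P : itree -> Prop) :
  P IEps -> (forall l ts, {in ts, forall c, P c} -> P (IJoin l ts)) -> forall t, P t.
Proof.
move=> P_eps P_join; fix IH 1 => -[|l ts]; [exact: P_eps | apply: P_join].
elim: ts => [|c cs IHcs] c'; first by clear IH; rewrite in_nil.
by rewrite inE => /predU1P[->|c'_cs]; [exact: IH | exact: IHcs].
Qed.

Lemma ptree_ind_mem (P : ptree -> Prop) :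
  P Eps -> (forall ts, {in ts, forall c, P c} -> P (Join ts)) -> forall t, P t.
Proof.
move=> P_eps P_join; fix IH 1 => -[|ts]; [exact: P_eps | apply: P_join].
elim: ts => [|c cs IHcs] c'; first by clear IH; rewrite in_nil.
by rewrite inE => /predU1P[->|c'_cs]; [exact: IH | exact: IHcs].
Qed.

(** * Branching words and the pattern 231 *)

Lemma mem_flatten_map (S : Type) (T : eqType) (f : S -> seq T) s x :
  (x \in flatten (map f s)) = has (fun y => x \in f y) s.
Proof. by elim: s => //= y s IH; rewrite mem_cat IH. Qed.

Definition sepcat (l : nat) (w : seq nat) (ws : seq (seq nat)) : seq nat :=
  w ++ flatten [seq l :: v | v <- ws].

Lemma sepcat_cons l w v ws : sepcat l w (v :: ws) = w ++ l :: sepcat l v ws.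
Proof. by []. Qed.

Lemma mem_sepcat l w ws x :
  (x \in sepcat l w ws) = ((ws != [::]) && (x == l)) || has (fun v => x \in v) (w :: ws).
Proof.
elim: ws w => [|v ws IH] w; first by rewrite /sepcat cats0 /= orbF.
rewrite sepcat_cons mem_cat inE IH /=.
by case: (x == l); case: (x \in w); rewrite /= ?andbF ?orbT.
Qed.

Lemma blevels_join l c cs :
  blevels (IJoin l (c :: cs)) = sepcat l (blevels c) (map blevels cs).
Proof. by rewrite /sepcat -map_comp. Qed.

Lemma mem_blevels t : incr_shape t -> blevels t =i vlevels t.
Proof.
elim/itree_ind_mem: t => // l [|c cs] IH /and3P[size_ts _ /allP shape_ts] x //.
rewrite blevels_join mem_sepcat -map_cons has_map inE mem_flatten_map.
have -> : map blevels cs != [::] by case: cs size_ts {IH shape_ts}.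
by congr (_ || _); apply: eq_in_has => c' c'_ts; exact: IH (shape_ts c' c'_ts) x.
Qed.

Fixpoint postlevels (t : itree) : seq nat :=
  if t is IJoin l ts then flatten (map postlevels ts) ++ [:: l] else [::].

Lemma postlevels_join l ts : postlevels (IJoin l ts) = flatten (map postlevels ts) ++ [:: l].
Proof. by []. Qed.

Lemma mem_postlevels t : postlevels t =i vlevels t.
Proof.
elim/itree_ind_mem: t => // l ts IH x /=.
rewrite mem_cat mem_seq1 orbC inE !mem_flatten_map; congr (_ || _).
by apply: eq_in_has => c /IH.
Qed.

Lemma vlevels_lt t l : incr_shape t -> root_below l t -> all (fun x => x < l) (vlevels t).
Proof.
elim/itree_ind_mem: t l => // l' ts IH l /and3P[_ /allP below_ts /allP shape_ts] /= lt_l'.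
rewrite lt_l' /=; apply/allP=> x; rewrite mem_flatten_map => /hasP[c c_ts x_c].
by apply: ltn_trans lt_l'; apply: (allP (IH c c_ts l' (shape_ts c c_ts) (below_ts c c_ts))).
Qed.

(* [w] contains neither the pattern 231 nor the pattern 121. *)
Definition avoids_231 (w : seq nat) : Prop :=
  forall a c b, subseq [:: a; c; b] w -> b <= a -> c <= a.

Lemma avoids_231_subseq w1 w2 : subseq w1 w2 -> avoids_231 w2 -> avoids_231 w1.
Proof. by move=> sub12 av2 a c b sub; apply: av2; apply: subseq_trans sub12. Qed.

Lemma avoids_231_map f w :
  {in w &, {mono f : x y / x <= y}} -> avoids_231 w -> avoids_231 (map f w).
Proof.
move=> f_mono av a c b /subseqP[m _]; rewrite -map_mask.
case def_s: (mask m w) => [|a' [|c' [|b' [|? ?]]]] //= [-> -> ->].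
have sub_w : {subset [:: a'; c'; b'] <= w} by rewrite -def_s; apply/mem_subseq/mask_subseq.
rewrite !f_mono ?sub_w ?inE ?eqxx ?orbT //; apply: av.
by rewrite -def_s mask_subseq.
Qed.

Lemma subseq_cat_split (T : eqType) (s u v : seq T) :
  subseq s (u ++ v) -> exists s1 s2, [/\ s = s1 ++ s2, subseq s1 u & subseq s2 v].
Proof.
case/subseqP=> m size_m ->; rewrite -(cat_take_drop (size u) m) mask_cat; last first.
  by rewrite size_takel // size_m size_cat leq_addr.
by exists (mask (take (size u) m) u), (mask (drop (size u) m) v); rewrite !mask_subseq.
Qed.

Lemma avoids_231_cat u l v :
  all (fun x => x < l) u -> all (fun y => y <= l) v -> allrel ltn u v ->
  avoids_231 u -> avoids_231 v -> avoids_231 (u ++ l :: v).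
Proof.
move=> /allP u_lt /allP v_le /allrelP u_lt_v av_u av_v a c b.
have lt_u_lv x y : x \in u -> y \in l :: v -> x < y.
  by move=> xu; rewrite inE => /predU1P[->|yv]; [exact: u_lt | exact: u_lt_v].
case/subseq_cat_split=> s1 [s2 [def_s sub_u sub_lv]] b_le_a.
have cross : a \in u -> b \in l :: v -> c <= a.
  by move=> au blv; have := lt_u_lv a b au blv; rewrite ltnNge b_le_a.
case: s1 def_s sub_u => [|a1 [|c1 [|b1 [|? ?]]]] /= def_s.
- move=> _; move: sub_lv; rewrite -def_s /=.
  case: eqP => [-> sub_v | _ /av_v]; last exact.
  by apply: v_le; apply: (mem_subseq sub_v); rewrite mem_head.
- case: def_s => <- def_s2; rewrite sub1seq => a_u; apply: cross a_u _.
  by apply: (mem_subseq sub_lv); rewrite -def_s2 !inE eqxx orbT.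
- case: def_s => <- <- def_s2 sub_u; apply: cross.
    by apply: (mem_subseq sub_u); rewrite mem_head.
  by apply: (mem_subseq sub_lv); rewrite -def_s2 mem_head.
- by case: def_s => <- <- <- _ /av_u; apply.
- by case: def_s.
Qed.

Lemma avoids_231_cat_lt u l v x y :
  avoids_231 (u ++ l :: v) -> x \in u -> y \in v -> x < l -> x < y.
Proof.
move=> av xu yv x_lt_l; rewrite ltnNge; apply/negP=> y_le_x.
have sub : subseq [:: x; l; y] (u ++ l :: v).
  by rewrite -cat1s; apply: cat_subseq; rewrite ?sub1seq //= eqxx sub1seq.
by have := av x l y sub y_le_x; rewrite leqNgt x_lt_l.
Qed.

Lemma avoids_231_sepcat l w ws :
  all (all (fun x => x < l)) (w :: ws) ->
  avoids_231 (sepcat l w ws) <->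
  {in w :: ws, forall v, avoids_231 v} /\ pairwise (allrel ltn) (w :: ws).
Proof.
elim: ws w => [|v ws IH] w lt_l.
  rewrite /sepcat cats0; split=> [av | [av _]]; last exact/av/mem_head.
  by split=> // v; rewrite inE => /eqP->.
have /andP[/allP w_lt vws_lt] :
  all (fun x => x < l) w && all (all (fun x => x < l)) (v :: ws) := lt_l.
have mem_rest y : y \in sepcat l v ws -> y = l \/ exists2 v', v' \in v :: ws & y \in v'.
  by rewrite mem_sepcat => /orP[/andP[_ /eqP]|/hasP]; [left | right].
have rest_lt y v' : v' \in v :: ws -> y \in v' -> y < l.
  by move=> v'_vws; apply: (allP (allP vws_lt v' v'_vws)).
rewrite sepcat_cons pairwise_cons; split=> [av | [av_vws /andP[/allP w_lt_vws pw]]].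
  have av_rest : avoids_231 (sepcat l v ws).
    by apply: avoids_231_subseq av; apply: subseq_trans (suffix_subseq _ _); apply: subseq_cons.
  have [av_vws pw] := (IH v vws_lt).1 av_rest.
  split; last (apply/andP; split=> //).
    move=> v'; rewrite inE => /predU1P[->|]; last exact: av_vws.
    by apply: avoids_231_subseq av; apply: prefix_subseq.
  apply/allP=> v' v'_vws; apply/allrelP=> x y xw yv'; apply: (avoids_231_cat_lt av) => //.
  - by rewrite mem_sepcat; apply/orP; right; apply/hasP; exists v'.
  - exact: w_lt.
apply: avoids_231_cat.
- exact/allP.
- by apply/allP=> y /mem_rest[->|[v' v'_vws /(rest_lt y v' v'_vws)/ltnW]].
- apply/allrelP=> x y xw /mem_rest[->|[v' v'_vws yv']]; first exact: w_lt.
  by apply: (allrelP (w_lt_vws v' v'_vws)).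
- by apply: av_vws; rewrite mem_head.
- by apply/(IH v vws_lt); split=> // v' v'_vws; apply: av_vws; rewrite inE v'_vws orbT.
Qed.

Lemma pairwise_flatten (T : Type) (r : rel T) (ss : seq (seq T)) :
  pairwise r (flatten ss) = all (pairwise r) ss && pairwise (allrel r) ss.
Proof.
elim: ss => //= s ss IH; rewrite pairwise_cat IH.
have -> : allrel r s (flatten ss) = all (allrel r s) ss.
  by elim: ss {IH} => [|s' ss IH] /=; rewrite ?allrel0r // allrel_catr IH.
by case: (pairwise r s); case: (all (allrel r s) ss); rewrite ?andbF.
Qed.

Lemma sorted_postlevels_avoids_231 t :
  incr_shape t -> pairwise ltn (postlevels t) <-> avoids_231 (blevels t).
Proof.
elim/itree_ind_mem: t => [_|l [|c cs] IH shape_t]; first by split=> // _ a c b.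
  by case/and3P: shape_t.
have /and3P[_ /allP below_ts /allP shape_ts] := shape_t.
set ts := c :: cs.
have lt_l c' : c' \in ts -> all (fun x => x < l) (vlevels c').
  by move=> c'_ts; apply: vlevels_lt; [apply: shape_ts | apply: below_ts].
have blev_lt : all (all (fun x => x < l)) (map blevels ts).
  rewrite all_map; apply/allP=> c' c'_ts /=.
  by rewrite (eq_all_r (mem_blevels (shape_ts c' c'_ts))) lt_l.
have post_blev c' : c' \in ts -> postlevels c' =i blevels c'.
  by move=> c'_ts x; rewrite mem_postlevels (mem_blevels (shape_ts c' c'_ts)).
have pw_eq : pairwise (allrel ltn) (map postlevels ts) = pairwise (allrel ltn) (map blevels ts).
  rewrite !pairwise_map; apply: (@eq_in_pairwise _ (mem ts)); last exact/allP.
  by move=> c1 c2 /post_blev e1 /post_blev e2; apply: eq_allrel_mem2.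
have post_lt : allrel ltn (flatten (map postlevels ts)) [:: l].
  rewrite allrel1r; apply/allP=> x; rewrite mem_flatten_map => /hasP[c' c'_ts].
  by rewrite mem_postlevels; apply: (allP (lt_l c' c'_ts)).
rewrite blevels_join (avoids_231_sepcat blev_lt) -map_cons postlevels_join.
rewrite pairwise_cat post_lt pairwise_flatten andbT andTb.
have sorted_avoids c' : c' \in ts -> pairwise ltn (postlevels c') <-> avoids_231 (blevels c').
  by move=> c'_ts; apply: IH => //; apply: shape_ts.
split=> [/andP[/allP sorted_ts pw] | [av_ts pw]].
  split; last by rewrite -pw_eq.
  by move=> _ /mapP[c' c'_ts ->]; apply/sorted_avoids/sorted_ts/map_f.
rewrite pw_eq pw andbT; apply/allP=> _ /mapP[c' c'_ts ->].
by apply/sorted_avoids/av_ts/map_f.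
Qed.

(** * Left increasing trees *)

Fixpoint erase (t : itree) : ptree :=
  if t is IJoin _ ts then Join (map erase ts) else Eps.

Lemma wf_erase t : incr_shape t -> wf_ptree (erase t).
Proof.
elim/itree_ind_mem: t => // l ts IH /and3P[size_ts _ /allP shape_ts] /=.
rewrite size_map size_ts all_map; apply/allP=> c c_ts; exact: IH (shape_ts c c_ts).
Qed.

Lemma shift_join s l ts : shift s (IJoin l ts) = IJoin (s + l) (map (shift s) ts).
Proof. by []. Qed.

Lemma shift0 t : shift 0 t = t.
Proof.
elim/itree_ind_mem: t => // l ts IH /=; congr IJoin.
by rewrite -[RHS]map_id; apply/eq_in_map => c /IH.
Qed.

Lemma shift_shift s1 s2 t : shift s1 (shift s2 t) = shift (s1 + s2) t.
Proof.
elim/itree_ind_mem: t => // l ts IH /=; rewrite addnA -map_comp; congr IJoin.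
by apply/eq_in_map => c /IH.
Qed.

Lemma postlevels_shift s t : postlevels (shift s t) = map (addn s) (postlevels t).
Proof.
elim/itree_ind_mem: t => // l ts IH.
rewrite shift_join !postlevels_join map_cat map_flatten -!map_comp.
by congr (flatten _ ++ _); apply/eq_in_map => c /IH.
Qed.

Lemma shift_all_cons r rs acc :
  shift_all (r :: rs) acc =
  (shift acc r.1 :: (shift_all rs (acc + r.2)).1, (shift_all rs (acc + r.2)).2).
Proof. by []. Qed.

Lemma shift_all_snd rs acc : (shift_all rs acc).2 = acc + sumn (map snd rs).
Proof. by elim: rs acc => [|r rs IH] acc; rewrite ?addn0 // shift_all_cons IH addnA. Qed.

Lemma postlevels_shift_all rs acc :
  {in rs, forall r, postlevels r.1 = iota 1 r.2} ->
  flatten (map postlevels (shift_all rs acc).1) = iota acc.+1 (sumn (map snd rs)).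
Proof.
elim: rs acc => [//|r rs IH] acc post_rs; rewrite shift_all_cons /=.
rewrite postlevels_shift post_rs ?mem_head // IH => [|r' r'_rs]; last first.
  by apply: post_rs; rewrite inE r'_rs orbT.
by rewrite -iotaDl iotaD addn1 addSn.
Qed.

Lemma Inc_join ts :
  Inc (Join ts) = (IJoin (shift_all (map Inc ts) 0).2.+1 (shift_all (map Inc ts) 0).1,
                   (shift_all (map Inc ts) 0).2.+1).
Proof. by []. Qed.

Lemma postlevels_Inc T : postlevels (Inc T).1 = iota 1 (Inc T).2.
Proof.
elim/ptree_ind_mem: T => // ts IH; rewrite Inc_join postlevels_join.
rewrite postlevels_shift_all => [|_ /mapP[c c_ts ->]]; last exact: IH.
by rewrite shift_all_snd add0n -[[:: _.+1]]/(iota (1 + sumn _) 1) -iotaD addn1.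
Qed.

Lemma size_postlevels_shift_Inc s T : size (postlevels (shift s (Inc T).1)) = (Inc T).2.
Proof. by rewrite postlevels_shift size_map postlevels_Inc size_iota. Qed.

Lemma shift_all_erase ts s acc :
  {in ts, forall c s', postlevels c = iota s'.+1 (size (postlevels c)) ->
                       shift s' (Inc (erase c)).1 = c} ->
  flatten (map postlevels ts) = iota (s + acc).+1 (size (flatten (map postlevels ts))) ->
  map (shift s) (shift_all (map Inc (map erase ts)) acc).1 = ts /\
  (shift_all (map Inc (map erase ts)) acc).2 = acc + size (flatten (map postlevels ts)).
Proof.
elim: ts acc => [|c cs IH] acc shift_ts; first by rewrite addn0.
rewrite /= size_cat iotaD => /eqP.
rewrite eqseq_cat ?size_iota // => /andP[/eqP post_c /eqP post_cs].
have shift_c : shift (s + acc) (Inc (erase c)).1 = c by apply: shift_ts (mem_head _ _) _ post_c.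
have size_c : (Inc (erase c)).2 = size (postlevels c).
  by rewrite -{2}shift_c size_postlevels_shift_Inc.
rewrite shift_shift shift_c.
case: (IH (acc + (Inc (erase c)).2)) => [c' c'_cs | | -> ->].
- by apply: shift_ts; rewrite inE c'_cs orbT.
- by rewrite {1}post_cs size_c addnA addSn.
- by rewrite size_c addnA.
Qed.

(* The offset [s] is the one carried by the subtrees of a left increasing tree. *)
Lemma shift_Inc_erase Y s :
  postlevels Y = iota s.+1 (size (postlevels Y)) -> shift s (Inc (erase Y)).1 = Y.
Proof.
elim/itree_ind_mem: Y s => [//|l ts IH] s.
rewrite postlevels_join size_cat iotaD => /eqP.
rewrite eqseq_cat ?size_iota // => /andP[/eqP post_ts /eqP [def_l]].
rewrite -(addn0 s) in post_ts.
have [shift_ts size_ts] := shift_all_erase IH post_ts.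
by rewrite /= shift_ts size_ts def_l add0n addnS addSn.
Qed.

Lemma leq_foldr_maxn s x : x \in s -> x <= foldr maxn 0 s.
Proof. by move=> xs; rewrite foldrE; apply: (leq_bigmax_seq x xs). Qed.

Lemma foldr_maxn_iota s k : s =i iota 1 k -> foldr maxn 0 s = k.
Proof.
move=> sE; apply/eqP; rewrite eqn_leq; apply/andP; split.
  by rewrite foldrE; apply/bigmax_leqP_seq=> x; rewrite sE mem_iota; lia.
by case: k sE => // k sE; apply: leq_foldr_maxn; rewrite sE mem_iota; lia.
Qed.

Lemma vlevels_increasing t : is_increasing t -> vlevels t =i iota 1 (nlevels t).
Proof.
case/and3P=> _ /allP pos /allP onto x; rewrite mem_iota add1n ltnS.
apply/idP/andP=> [xt | [x_gt0 x_le]]; first by rewrite pos // leq_foldr_maxn.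
by apply: onto; rewrite mem_iota add1n ltnS x_gt0.
Qed.

Lemma blevels_increasing t : is_increasing t -> blevels t =i iota 1 (nlevels t).
Proof.
by move=> incr_t x; rewrite mem_blevels ?vlevels_increasing //; case/and3P: incr_t.
Qed.

Lemma increasing_of_blevels t k :
  incr_shape t -> blevels t =i iota 1 k -> is_increasing t /\ nlevels t = k.
Proof.
move=> shape_t bE; have vE : vlevels t =i iota 1 k by move=> x; rewrite -mem_blevels.
have nE : nlevels t = k := foldr_maxn_iota vE.
split=> //; apply/and3P; split=> //; apply/allP=> x; rewrite ?vE ?nE mem_iota //.
by case/andP.
Qed.

Lemma left_increasingP Y :
  is_increasing Y -> left_increasing Y <-> avoids_231 (blevels Y).
Proof.
move=> incY; have shapeY : incr_shape Y by case/and3P: incY.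
rewrite -sorted_postlevels_avoids_231 //; split=> [[T [_ <-]] | sortedY].
  by rewrite postlevels_Inc -(sorted_pairwise ltn_trans) iota_ltn_sorted.
have postE : postlevels Y = iota 1 (nlevels Y).
  apply: (irr_sorted_eq ltn_trans ltnn) => [||x]; last first.
  - by rewrite mem_postlevels vlevels_increasing.
  - exact: iota_ltn_sorted.
  - by rewrite (sorted_pairwise ltn_trans).
exists (erase Y); split; first exact: wf_erase.
by rewrite -[RHS](@shift_Inc_erase Y 0) ?shift0 // postE size_iota.
Qed.

(** * Set compositions of words and their restrictions *)

Definition positions (w : seq nat) (i : nat) : seq nat :=
  [seq j <- iota 1 (size w) | nth 0 w j.-1 == i].

Definition sigma_word (w : seq nat) (k : nat) : setcomp := map (positions w) (iota 1 k).

Lemma sigmaE t : sigma t = sigma_word (blevels t) (nlevels t).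
Proof. by []. Qed.

Lemma map_nth_iota1 (w : seq nat) : [seq nth 0 w j.-1 | j <- iota 1 (size w)] = w.
Proof. by rewrite (iotaDl 1 0) -map_comp; apply: mkseq_nth. Qed.

Lemma mem_positions w i j :
  (j \in positions w i) = (0 < j <= size w) && (nth 0 w j.-1 == i).
Proof. by rewrite mem_filter mem_iota andbC add1n ltnS. Qed.

Lemma positions_nonempty w i : (positions w i != [::]) = (i \in w).
Proof. by rewrite -has_filter -has_pred1 -[in RHS](map_nth_iota1 w) has_map. Qed.

Lemma positions_map f w i :
  {in w &, injective f} -> i \in w -> positions (map f w) (f i) = positions w i.
Proof.
move=> f_inj iw; rewrite /positions size_map; apply: eq_in_filter => j.
rewrite mem_iota add1n ltnS => /andP[j_gt0 j_le].
have j_lt : j.-1 < size w by rewrite prednK.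
by rewrite (nth_map 0) // (inj_in_eq f_inj) ?mem_nth.
Qed.

Lemma sigma_word_nth w1 w2 k p :
  w1 =i iota 1 k -> sigma_word w1 k = sigma_word w2 k -> p < size w1 ->
  p < size w2 /\ nth 0 w2 p = nth 0 w1 p.
Proof.
move=> w1E sigma12 p_lt; set i := nth 0 w1 p.
have : i \in iota 1 k by rewrite -w1E mem_nth.
rewrite mem_iota add1n ltnS => /andP[i_gt0 i_le].
have pos12 : positions w1 i = positions w2 i.
  have := congr1 (nth [::] ^~ i.-1) sigma12.
  by rewrite !(nth_map 0) ?size_iota ?prednK // nth_iota ?prednK // add1n prednK.
have : p.+1 \in positions w1 i by rewrite mem_positions /= p_lt eqxx.
by rewrite pos12 mem_positions => /andP[/= p_lt2 /eqP].
Qed.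

Lemma sigma_word_inj w1 w2 k1 k2 :
  w1 =i iota 1 k1 -> w2 =i iota 1 k2 -> sigma_word w1 k1 = sigma_word w2 k2 -> w1 = w2.
Proof.
move=> w1E w2E sigma12.
have k12 : k1 = k2 by have := congr1 size sigma12; rewrite !size_map !size_iota.
subst k2.
have le_size w w' : w =i iota 1 k1 -> sigma_word w k1 = sigma_word w' k1 -> size w <= size w'.
  move=> wE sigma_ww'; case: (posnP (size w)) => [-> // | w_gt0].
  have lt_w : (size w).-1 < size w by rewrite ltn_predL.
  by have [] := sigma_word_nth wE sigma_ww' lt_w; rewrite prednK.
apply: (@eq_from_nth _ 0); first by apply/eqP; rewrite eqn_leq !le_size.
by move=> p p_lt; have [_ ->] := sigma_word_nth w1E sigma12 p_lt.
Qed.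

Lemma map_count_le_sorted s :
  sorted ltn s -> map (fun x => count (fun b => b <= x) s) s = iota 1 (size s).
Proof.
elim: s => //= x s IH sorted_xs.
have /allP gt_x : all (fun y => x < y) s := order_path_min ltn_trans sorted_xs.
have -> : count (fun b => b <= x) s = 0.
  by apply/eqP; rewrite -leqn0 leqNgt -has_count; apply/hasPn=> y /gt_x; rewrite ltnNge.
rewrite leqnn (iotaDl 1 1) -IH ?(path_sorted sorted_xs) // -map_comp.
by congr (_ :: _); apply/eq_in_map=> y /gt_x /ltnW /= ->.
Qed.

Lemma map_count_le_filter s (P : pred nat) :
  sorted ltn s ->
  map (fun j => count (fun b => b <= j) s) (filter P s) =
  [seq p <- iota 1 (size s) | P (nth 0 s p.-1)].
Proof.
move=> sorted_s; rewrite -[in filter P s](map_nth_iota1 s) filter_map -map_comp.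
rewrite -[RHS]map_id; apply/eq_in_map=> p; rewrite mem_filter mem_iota add1n ltnS.
case/andP=> _ /andP[p_gt0 p_le] /=.
have p_lt : p.-1 < size s by rewrite prednK.
have := congr1 (nth 0 ^~ p.-1) (map_count_le_sorted sorted_s).
by rewrite (nth_map 0) // nth_iota // add1n prednK.
Qed.

Lemma count_le_lt s x y :
  y < x -> x \in s -> count (fun b => b <= y) s < count (fun b => b <= x) s.
Proof.
move=> lt_yx; elim: s => //= z s IH.
have le_count : count (fun b => b <= y) s <= count (fun b => b <= x) s.
  by apply: sub_count => b /leq_trans; apply; apply: ltnW.
rewrite inE => /predU1P[<- | /IH lt_count].
  by rewrite leqnn (leqNgt x y) lt_yx add0n add1n ltnS.
rewrite -addnS; apply: leq_add lt_count.
by case: (leqP z y) => // zy; rewrite (leq_trans zy (ltnW lt_yx)).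
Qed.

Lemma perm_undup_sorted (A s : seq nat) : sorted ltn s -> s =i A -> perm_eq (undup A) s.
Proof.
move=> sorted_s sE; apply: uniq_perm; rewrite ?undup_uniq ?(sorted_uniq ltn_trans ltnn) //.
by move=> x; rewrite mem_undup sE.
Qed.

Lemma rank_sorted (A s : seq nat) :
  sorted ltn s -> s =i A -> rank A =1 (fun j => count (fun b => b <= j) s).
Proof.
by move=> sorted_s sE j; rewrite /rank size_filter (permP (perm_undup_sorted sorted_s sE)).
Qed.

Lemma rank_mono u : {in u &, {mono rank u : x y / x <= y}}.
Proof.
move=> x y xu _; rewrite /rank !size_filter.
apply/idP/idP=> [|le_xy]; last by apply: sub_count => b /leq_trans; apply.
by apply: contraTT; rewrite -!ltnNge => lt_yx; apply: count_le_lt; rewrite ?mem_undup.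
Qed.

Definition restrict_word (w A : seq nat) : seq nat :=
  [seq nth 0 w j.-1 | j <- iota 1 (size w) & j \in A].

Lemma restrict_word_subseq w A : subseq (restrict_word w A) w.
Proof. by rewrite -[in X in subseq _ X](map_nth_iota1 w); apply/map_subseq/filter_subseq. Qed.

Lemma positions_restrict_word w A i :
  {subset A <= iota 1 (size w)} ->
  map (rank A) [seq j <- positions w i | j \in A] = positions (restrict_word w A) i.
Proof.
move=> A_sub; set P := [seq j <- iota 1 (size w) | j \in A].
have sorted_P : sorted ltn P := sorted_filter ltn_trans _ (iota_ltn_sorted 1 _).
have PE : P =i A by move=> j; rewrite mem_filter andb_idr // => /A_sub.
have -> : [seq j <- positions w i | j \in A] = [seq j <- P | nth 0 w j.-1 == i].
  by rewrite -!filter_predI; apply: eq_filter => j /=; rewrite andbC.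
rewrite (eq_map (rank_sorted sorted_P PE)) map_count_le_filter // /positions size_map.
apply: eq_in_filter => p; rewrite mem_iota add1n ltnS => /andP[p_gt0 p_le].
by rewrite (nth_map 0) // prednK.
Qed.

Definition standardize (u : seq nat) : seq nat := map (rank u) u.

Lemma avoids_231_standardize u : avoids_231 u -> avoids_231 (standardize u).
Proof. exact: avoids_231_map (@rank_mono u). Qed.

Lemma positions_standardize u i :
  i \in u -> positions (standardize u) (rank u i) = positions u i.
Proof.
by apply: positions_map; apply: (mono_inj_in leqnn anti_leq (@rank_mono u)).
Qed.

Lemma map_rank_letters u k :
  {subset u <= iota 1 k} ->
  map (rank u) [seq i <- iota 1 k | i \in u] = iota 1 (size (undup u)).
Proof.
move=> u_sub; set V := [seq i <- iota 1 k | i \in u].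
have sorted_V : sorted ltn V := sorted_filter ltn_trans _ (iota_ltn_sorted 1 _).
have VE : V =i u by move=> i; rewrite mem_filter andb_idr // => /u_sub.
rewrite (eq_map (rank_sorted sorted_V VE)) map_count_le_sorted //.
by rewrite (perm_size (perm_undup_sorted sorted_V VE)).
Qed.

Lemma standardize_iota u k :
  {subset u <= iota 1 k} -> standardize u =i iota 1 (size (undup u)).
Proof.
move=> u_sub x; rewrite -(map_rank_letters u_sub); apply: eq_mem_map => i.
by rewrite mem_filter andb_idr // => /u_sub.
Qed.

Lemma restrict_sigma_word w k A :
  {subset w <= iota 1 k} -> {subset A <= iota 1 (size w)} ->
  restrict (sigma_word w k) A =
  sigma_word (standardize (restrict_word w A)) (size (undup (restrict_word w A))).
Proof.
move=> w_sub A_sub; set u := restrict_word w A.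
have u_sub : {subset u <= iota 1 k}.
  by move=> x /(mem_subseq (restrict_word_subseq w A)) /w_sub.
transitivity [seq positions u i | i <- iota 1 k & i \in u].
  rewrite /restrict /sigma_word -map_comp filter_map -map_comp.
  rewrite (eq_map (fun i => positions_restrict_word i A_sub)); congr map.
  apply: eq_filter => i /=; rewrite -positions_nonempty -(positions_restrict_word i A_sub).
  by case: [seq _ <- _ | _].
rewrite /sigma_word -(map_rank_letters u_sub) -map_comp; apply/eq_in_map => i.
by rewrite mem_filter => /andP[iu _] /=; rewrite positions_standardize.
Qed.

(** * Every covering word is a branching word *)

Fixpoint split_on (m : nat) (w : seq nat) : seq nat * seq (seq nat) :=
  if w is x :: w' then
    let p := split_on m w' in
    if x == m then ([::], p.1 :: p.2) else (x :: p.1, p.2)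
  else ([::], [::]).

Lemma split_onK m w : sepcat m (split_on m w).1 (split_on m w).2 = w.
Proof. by elim: w => //= x w IH; case: eqP => [->|_]; rewrite -[in RHS]IH. Qed.

Lemma size_split_on m w : size (split_on m w).2 = count_mem m w.
Proof. by elim: w => //= x w IH; rewrite eq_sym; case: eqP; rewrite /= IH. Qed.

Lemma mem_split_on m w v x :
  v \in (split_on m w).1 :: (split_on m w).2 -> x \in v -> (x \in w) && (x != m).
Proof.
elim: w v => [|y w IH] v /=; first by rewrite inE => /eqP->.
have IHy v' : v' \in (split_on m w).1 :: (split_on m w).2 -> x \in v' -> (x \in y :: w) && (x != m).
  by move=> v'_in /(IH v' v'_in)/andP[xw ->]; rewrite inE xw orbT.
case: eqP => [_ | /eqP ym]; rewrite inE.
  by case/predU1P=> [-> // | /IHy].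
case/predU1P=> [-> | v_in]; last by apply: IHy; rewrite inE v_in orbT.
by rewrite inE => /predU1P[-> | /IHy]; [rewrite mem_head | apply; rewrite mem_head].
Qed.

(* [decode n w] is tau of the word [w] over the letters 1..n. *)
Fixpoint decode (n : nat) (w : seq nat) : itree :=
  if n is n'.+1 then
    if w is [::] then IEps
    else if n \in w then IJoin n (map (decode n') ((split_on n w).1 :: (split_on n w).2))
    else decode n' w
  else IEps.

Lemma root_below_leq l l' t : l <= l' -> root_below l t -> root_below l' t.
Proof. by case: t => //= l0 _ le_ll' /leq_trans; apply. Qed.

Lemma decodeS n x w :
  decode n.+1 (x :: w) =
  if n.+1 \in x :: w then
    IJoin n.+1 (map (decode n) ((split_on n.+1 (x :: w)).1 :: (split_on n.+1 (x :: w)).2))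
  else decode n (x :: w).
Proof. by []. Qed.

Lemma incr_shape_join l ts :
  incr_shape (IJoin l ts) = [&& 1 < size ts, all (root_below l) ts & all incr_shape ts].
Proof. by []. Qed.

Lemma decodeP n w :
  all (fun x => 0 < x <= n) w ->
  [/\ blevels (decode n w) = w, incr_shape (decode n w) & root_below n.+1 (decode n w)].
Proof.
elim: n w => [|n IH] [|x w] //; first by case/andP; lia.
rewrite decodeS; set w' := x :: w => /allP w'_bnd.
case: ifP => [n1_in | n1_notin]; last first.
  have [-> shape_w rb_w] : [/\ blevels (decode n w') = w', incr_shape (decode n w') &
                               root_below n.+1 (decode n w')].
    apply: IH; apply/allP=> y y_in.
    have y_n1 : y != n.+1 by apply: contraFneq _ n1_notin => <-.
    by have := w'_bnd y y_in; move: y_n1; lia.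
  by split=> //; apply: root_below_leq rb_w.
set ss := (split_on n.+1 w').1 :: (split_on n.+1 w').2.
have dec_ss v : v \in ss ->
    [/\ blevels (decode n v) = v, incr_shape (decode n v) & root_below n.+1 (decode n v)].
  move=> v_in; apply: IH; apply/allP=> y /(mem_split_on v_in)/andP[y_in y_n1].
  by have := w'_bnd y y_in; move: y_n1; lia.
split=> //.
- rewrite blevels_join -map_comp -[RHS](split_onK n.+1 w'); congr sepcat.
    by case: (dec_ss _ (mem_head _ _)).
  by rewrite -[RHS]map_id; apply/eq_in_map=> v v_in; case: (dec_ss v (@mem_behead _ ss v v_in)).
- have size_ss : size ss = (count_mem n.+1 w').+1 := congr1 succn (size_split_on n.+1 w').
  rewrite incr_shape_join; apply/and3P; split.
  + by rewrite size_map size_ss ltnS -has_count has_pred1.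
  + by rewrite all_map; apply/allP=> v /dec_ss[].
  + by rewrite all_map; apply/allP=> v /dec_ss[].
- exact: ltnSn.
Qed.

Lemma decode_sigma w k :
  w =i iota 1 k -> is_increasing (decode k w) /\ sigma (decode k w) = sigma_word w k.
Proof.
move=> wE; have [|blev shape _] := @decodeP k w.
  by apply/allP=> x; rewrite wE mem_iota add1n ltnS.
have [incr nlev] : is_increasing (decode k w) /\ nlevels (decode k w) = k.
  by apply: increasing_of_blevels shape _ => x; rewrite blev.
by rewrite sigmaE blev nlev.
Qed.

Theorem corollary4p7 (X : itree) (A : seq nat) :
  is_increasing X -> left_increasing X ->
  {subset A <= iota 1 (nbranch X)} ->
  (exists Y, is_increasing Y /\ sigma Y = restrict (sigma X) A) /\
  (forall Y, is_increasing Y -> sigma Y = restrict (sigma X) A -> left_increasing Y).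
Proof.
move=> incX leftX A_sub; have blevX := blevels_increasing incX.
set u := restrict_word (blevels X) A.
have u_sub : {subset u <= iota 1 (nlevels X)}.
  by move=> x /(mem_subseq (restrict_word_subseq _ _)); rewrite blevX.
have sigmaA : restrict (sigma X) A = sigma_word (standardize u) (size (undup u)).
  by rewrite sigmaE restrict_sigma_word // => x; rewrite blevX.
have stdE := standardize_iota u_sub.
split=> [|Y incY sigmaY].
  by exists (decode (size (undup u)) (standardize u)); rewrite sigmaA; apply: decode_sigma.
apply/left_increasingP => //.
have -> : blevels Y = standardize u.
  by apply: sigma_word_inj (blevels_increasing incY) stdE _; rewrite -sigmaE sigmaY.
apply/avoids_231_standardize/(avoids_231_subseq (restrict_word_subseq _ _)).
exact/left_increasingP.
Qed.
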